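(* For every $\ell\ge0$, the coefficients of $\hbar^s$, $s\le\ell$, in the asymptotic expansion $$\mathrm{Tr}(t,\hbar)\sim\sum_{m=0}^\infty\frac{(it)^m}{m!}\Big(\sum_{|r|\ge1}\hbar^{|r|-1}c_r(\hbar)\Big(\frac1tD_\theta\Big)^r\Big)^m\frac{e^{\frac{it}{2}\sum_j\theta_j}}{\prod_j(1-e^{it\theta_j})}\Bigg|_{\theta=u}$$ determine the coefficients of $\hbar^s$, $s\le\ell$, in the series $$V(t,\hbar)=\sum_{|r|\ge1}\hbar^{|r|-1}c_r(\hbar)\Big(\frac1tD_\theta\Big)^r\frac{e^{\frac{it}{2}\sum_j\theta_j}}{\prod_j(1-e^{it\theta_j})}\Bigg|_{\theta=u}.$$
   Context: Here $u=(u_1,\dots,u_n)$ has positive entries linearly independent over $\mathbb{Q}$, $D_\theta=-i(\partial_{\theta_1},\dots,\partial_{\theta_n})$, $r\in\mathbb{Z}_{\ge0}^n$, and $c_r(\hbar)=\sum_{i\ge0}c_{r,i}\hbar^{|r|-1+i}$ with $c_r(0)=0$ when $|r|=1$ (the coefficients of the semi-classical Birkhoff canonical form). *)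

From Stdlib Require Import Reals List QArith Qreals.
From Coquelicot Require Import Coquelicot.
Import ListNotations.
Open Scope R_scope.

Definition ce (x : R) : C := (cos x, sin x).

(* points theta = (theta_0, ..., theta_{n-1}) are functions nat -> R
   (only the first n coordinates matter) *)
Definition upd (th : nat -> R) (j : nat) (x : R) : nat -> R :=
  fun k => if Nat.eqb k j then x else th k.

Definition Rsum_lt (n : nat) (f : nat -> R) : R :=
  fold_right Rplus 0 (map f (seq 0%nat n)).
Definition Csum (l : list C) : C := fold_right Cplus (RtoC 0) l.
Definition Cprod_lt (n : nat) (f : nat -> C) : C :=
  fold_right Cmult (RtoC 1) (map f (seq 0%nat n)).

Definition Fun := (nat -> R) -> C.

Definition Dpart (j : nat) (g : Fun) : Fun :=
  fun th => Cmult (Copp Ci)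
    (Derive (fun x => fst (g (upd th j x))) (th j),
     Derive (fun x => snd (g (upd th j x))) (th j)).

Fixpoint iter_op (k : nat) (op : Fun -> Fun) (g : Fun) : Fun :=
  match k with O => g | S k' => op (iter_op k' op g) end.

(* D_theta^r for a multi-index r = [r_0; ...; r_{n-1}], starting at coordinate j *)
Fixpoint Dmulti_from (j : nat) (r : list nat) (g : Fun) : Fun :=
  match r with
  | [] => g
  | a :: r' => iter_op a (Dpart j) (Dmulti_from (S j) r' g)
  end.
Definition Dmulti (r : list nat) (g : Fun) : Fun := Dmulti_from 0 r g.

Fixpoint multi (n d : nat) : list (list nat) :=
  match n with
  | O => match d with O => [[]] | _ => [] end
  | S n' => flat_map (fun a => map (cons a) (multi n' (d - a))) (seq 0%nat (S d))
  end.

Definition lsum (r : list nat) : nat := fold_right Nat.add O r.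

Definition Fmodel (n : nat) (t : R) : Fun :=
  fun th => Cdiv (ce (t / 2 * Rsum_lt n th))
                 (Cprod_lt n (fun j => Cminus (RtoC 1) (ce (t * th j)))).

(* Coefficients c_{r,i}: c r i, so that c_r(hbar) = sum_i c r i hbar^{|r|-1+i}.
   The operator  P = sum_{|r|>=1} hbar^{|r|-1} c_r(hbar) (t^{-1} D_theta)^r
   is a formal series  sum_k hbar^k P_k  with
   P_k = sum_{|r| = d >= 1, 2d-2 <= k} c_{r, k+2-2d} t^{-d} D_theta^r. *)
Definition Pk (n : nat) (c : list nat -> nat -> R) (t : R) (k : nat) (g : Fun) : Fun :=
  fun th =>
    Csum (flat_map (fun d =>
            if Nat.leb (2 * d - 2)%nat k then
              map (fun r => Cmult (RtoC (c r (k + 2 - 2 * d)%nat * / (t ^ d)))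
                                  (Dmulti r g th))
                  (multi n d)
            else [])
         (seq 1%nat (S k))).

Definition Pcomp (n : nat) (c : list nat -> nat -> R) (t : R) (ks : list nat) (g : Fun) : Fun :=
  fold_right (fun k h => Pk n c t k h) g ks.

Fixpoint fact_R (m : nat) : R :=
  match m with O => 1 | S m' => INR m * fact_R m' end.

(* Coefficient of hbar^s in  sum_m (it)^m/m! P^m F |_{theta=u}.
   The coefficient of hbar^s in P^m is sum_{k_1+...+k_m = s} P_{k_1}...P_{k_m};
   since P_0 = 0 (because c_r(0)=0 for |r|=1), terms with m > s vanish,
   so the sum over m is truncated at m = s. *)
Definition TrCoef (n : nat) (c : list nat -> nat -> R) (u : nat -> R) (t : R) (s : nat) : C :=
  Csum (map (fun m =>
     Cmult (Cdiv (Cpow (Cmult Ci (RtoC t)) m) (RtoC (fact_R m)))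
           (Csum (map (fun ks => Pcomp n c t ks (Fmodel n t) u) (multi m s))))
   (seq 0%nat (S s))).

(* Coefficient of hbar^s in  V(t,hbar) = P F |_{theta=u} *)
Definition VCoef (n : nat) (c : list nat -> nat -> R) (u : nat -> R) (t : R) (s : nat) : C :=
  Pk n c t s (Fmodel n t) u.

Definition Q_lin_indep (n : nat) (u : nat -> R) : Prop :=
  forall q : nat -> Q,
    Rsum_lt n (fun j => Q2R (q j) * u j) = 0 -> forall j, (j < n)%nat -> q j == 0%Q.

(* admissible times: t <> 0 and the model function is regular at theta = u *)
Definition good_time (n : nat) (u : nat -> R) (t : R) : Prop :=
  t <> 0 /\ forall j, (j < n)%nat -> ce (t * u j) <> RtoC 1.

Definition c_admissible (n : nat) (c : list nat -> nat -> R) : Prop :=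
  forall r, length r = n -> lsum r = 1%nat -> c r 0%nat = 0.

(* Expanding the exponential, the coefficient of [hbar^{s+1}] in [Tr] is [it] times that of [V]
   plus products [P_{k_1} ... P_{k_m}] with [m >= 2]; since [P_0 = 0] these only involve [P_k]
   with [k <= s]. By induction on [s] it therefore suffices to show that the coefficient of
   [hbar^s] in [V] determines the coefficients of [P_s]. Applied to the model function,
   [D_theta^r] produces [prod_j t^{r_j} phi_{r_j}(t u_j)], where
   [phi_m = (-i d/dy)^m (e^{iy/2} / (1 - e^{iy}))], so one needs the functions
   [t |-> prod_j phi_{r_j}(t u_j)] to be linearly independent. Clearing denominators turns a
   vanishing combination into an exponential sum in [t] whose frequencies are pairwise
   distinct by the [Q]-linear independence of [u]; a Vandermonde argument kills its
   coefficients, and the numerators of [phi_0, ..., phi_K], which are independent modulo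
   powers of [1 - w^2], separate the multi-indices. *)

From Stdlib Require Import Reals List QArith Qreals Lia Lra FunctionalExtensionality.
From Coquelicot Require Import Coquelicot.
Import ListNotations.
Open Scope R_scope.

Lemma C_ext (x y : C) : fst x = fst y -> snd x = snd y -> x = y.
Proof. destruct x, y; simpl; intros; subst; auto. Qed.

Lemma RtoC_inj x y : RtoC x = RtoC y -> x = y.
Proof. intros H. injection H; auto. Qed.

Lemma Cmult_eq0_reg_r (a d : C) : d <> RtoC 0 -> Cmult a d = RtoC 0 -> a = RtoC 0.
Proof.
  intros Hd H. replace a with (Cmult (Cmult a d) (Cinv d)) by (field; auto).
  rewrite H. ring.
Qed.

Lemma Csub1_neq0 z : z <> RtoC 1 -> Cminus (RtoC 1) z <> RtoC 0.
Proof. intros H E. apply H. rewrite <- (Cplus_0_l z), <- E. ring. Qed.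

Lemma Cpow_RtoC w a : Cpow (RtoC w) a = RtoC (w ^ a).
Proof. induction a; simpl; auto. rewrite IHa, RtoC_mult. auto. Qed.

Lemma Cpow_add z a b : Cpow z (a + b) = Cmult (Cpow z a) (Cpow z b).
Proof. induction a; simpl. ring. rewrite IHa. ring. Qed.

Lemma Cpow_Cinv_mul z k : z <> RtoC 0 -> Cmult (Cpow (Cinv z) k) (Cpow z k) = RtoC 1.
Proof.
  intros H. induction k; simpl. ring.
  transitivity (Cmult (Cmult (Cinv z) z) (Cmult (Cpow (Cinv z) k) (Cpow z k))); [ring|].
  rewrite IHk, Cinv_l; auto. ring.
Qed.

Lemma Csum_app l1 l2 : Csum (l1 ++ l2) = Cplus (Csum l1) (Csum l2).
Proof. induction l1; simpl. rewrite Cplus_0_l; auto. rewrite IHl1. ring. Qed.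

Lemma Csum_eq0 l : (forall x, In x l -> x = RtoC 0) -> Csum l = RtoC 0.
Proof. induction l; simpl; intros H; auto. rewrite IHl, (H a) by auto. ring. Qed.

Lemma Csum_RtoC (f : nat -> R) l :
  Csum (map (fun a => RtoC (f a)) l) = RtoC (fold_right Rplus 0 (map f l)).
Proof. induction l; simpl; auto. rewrite IHl, RtoC_plus. auto. Qed.

Section CsumMap.
Context {A : Type}.
Implicit Types (f g : A -> C) (l : list A).

Lemma Csum_map_ext_in f g l :
  (forall x, In x l -> f x = g x) -> Csum (map f l) = Csum (map g l).
Proof. intros H; f_equal; apply map_ext_in; auto. Qed.

Lemma Csum_map_eq0 f l : (forall x, In x l -> f x = RtoC 0) -> Csum (map f l) = RtoC 0.
Proof. induction l; simpl; intros H; auto. rewrite H, IHl; auto. ring. Qed.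

Lemma Csum_map_cons f a l : Csum (map f (a :: l)) = Cplus (f a) (Csum (map f l)).
Proof. reflexivity. Qed.

Lemma Csum_map_scal_l (a : C) f l :
  Csum (map (fun x => Cmult a (f x)) l) = Cmult a (Csum (map f l)).
Proof. induction l; simpl. ring. rewrite IHl; ring. Qed.

Lemma Csum_map_scal_r (a : C) f l :
  Csum (map (fun x => Cmult (f x) a) l) = Cmult (Csum (map f l)) a.
Proof. induction l; simpl. ring. rewrite IHl; ring. Qed.

Lemma Csum_map_plus f g l :
  Csum (map (fun x => Cplus (f x) (g x)) l) = Cplus (Csum (map f l)) (Csum (map g l)).
Proof. induction l; simpl. ring. rewrite IHl; ring. Qed.

Lemma Csum_map_minus f g l :
  Csum (map (fun x => Cminus (f x) (g x)) l) = Cminus (Csum (map f l)) (Csum (map g l)).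
Proof. induction l; simpl. ring. rewrite IHl; ring. Qed.

End CsumMap.

Lemma Csum_map_flat_map {A B} (f : B -> C) (g : A -> list B) (l : list A) :
  Csum (map f (flat_map g l)) = Csum (map (fun x => Csum (map f (g x))) l).
Proof. induction l; simpl; auto. rewrite map_app, Csum_app, IHl; auto. Qed.

Lemma Csum_map_swap {A B} (f : A -> B -> C) (l : list A) (l' : list B) :
  Csum (map (fun x => Csum (map (f x) l')) l) =
  Csum (map (fun y => Csum (map (fun x => f x y) l)) l').
Proof.
  induction l; simpl.
  - symmetry; apply Csum_map_eq0; auto.
  - rewrite IHl, <- Csum_map_plus. auto.
Qed.

Lemma seq0_S n : seq 0 (S n) = 0%nat :: map S (seq 0 n).
Proof. simpl. rewrite seq_shift. auto. Qed.

Lemma Rsum_lt_0 f : Rsum_lt 0 f = 0.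
Proof. reflexivity. Qed.

Lemma Rsum_lt_S n f : Rsum_lt (S n) f = f 0%nat + Rsum_lt n (fun j => f (S j)).
Proof. unfold Rsum_lt. rewrite seq0_S. simpl. rewrite map_map. auto. Qed.

Lemma Rsum_lt_Sr n f : Rsum_lt (S n) f = Rsum_lt n f + f n.
Proof.
  unfold Rsum_lt. rewrite seq_S, map_app, fold_right_app. simpl.
  generalize (f n). induction (map f (seq 0 n)); simpl; intros; [ring|]. rewrite IHl. ring.
Qed.

Lemma Rsum_lt_ext n f g : (forall j, (j < n)%nat -> f j = g j) -> Rsum_lt n f = Rsum_lt n g.
Proof.
  revert f g; induction n; intros f g H; auto.
  rewrite !Rsum_lt_S, H by lia. f_equal. apply IHn. intros; apply H; lia.
Qed.

Lemma Rsum_lt_eq0 n f : (forall j, (j < n)%nat -> f j = 0) -> Rsum_lt n f = 0.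
Proof.
  revert f; induction n; intros f H; auto.
  rewrite Rsum_lt_S, IHn by (intros; apply H; lia). rewrite H by lia. ring.
Qed.

Lemma Rsum_lt_plus n f g : Rsum_lt n (fun j => f j + g j) = Rsum_lt n f + Rsum_lt n g.
Proof.
  revert f g; induction n; intros f g. rewrite !Rsum_lt_0; ring.
  rewrite !Rsum_lt_S, IHn. ring.
Qed.

Lemma Rsum_lt_scal n c f : c * Rsum_lt n f = Rsum_lt n (fun j => c * f j).
Proof.
  revert f; induction n; intros f. rewrite !Rsum_lt_0; ring.
  rewrite !Rsum_lt_S, <- IHn. ring.
Qed.

Lemma Rsum_lt_swap N M (f : nat -> nat -> R) :
  Rsum_lt N (fun i => Rsum_lt M (f i)) = Rsum_lt M (fun j => Rsum_lt N (fun i => f i j)).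
Proof.
  revert f; induction N; intros f.
  - symmetry. apply Rsum_lt_eq0. intros; apply Rsum_lt_0.
  - rewrite Rsum_lt_S, IHN, <- Rsum_lt_plus. apply Rsum_lt_ext. intros; symmetry; apply Rsum_lt_S.
Qed.

Lemma Rsum_lt_widen N N' f : (N <= N')%nat -> (forall j, (N <= j < N')%nat -> f j = 0) ->
  Rsum_lt N' f = Rsum_lt N f.
Proof.
  intros Hle H. induction Hle as [|N' Hle IH]; auto.
  rewrite Rsum_lt_Sr, IH by (intros; apply H; lia). rewrite H by lia. ring.
Qed.

Lemma Rsum_lt_le n f g : (forall j, (j < n)%nat -> f j <= g j) -> Rsum_lt n f <= Rsum_lt n g.
Proof.
  revert f g; induction n; intros f g H. rewrite !Rsum_lt_0; lra.
  rewrite !Rsum_lt_S. apply Rplus_le_compat; [apply H; lia|]. apply IHn. intros; apply H; lia.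
Qed.

Lemma Rsum_lt_ge0 n f : (forall j, (j < n)%nat -> 0 <= f j) -> 0 <= Rsum_lt n f.
Proof.
  intros H. rewrite <- (Rsum_lt_eq0 n (fun _ => 0)) by auto. apply Rsum_lt_le; auto.
Qed.

Lemma Rsum_lt_ge_term n f k : (forall j, (j < n)%nat -> 0 <= f j) -> (k < n)%nat ->
  f k <= Rsum_lt n f.
Proof.
  revert f k; induction n; intros f k H Hk. lia.
  rewrite Rsum_lt_S. destruct k.
  - pose proof (Rsum_lt_ge0 n (fun j => f (S j)) ltac:(intros; apply H; lia)). lra.
  - pose proof (IHn (fun j => f (S j)) k ltac:(intros; apply H; lia) ltac:(lia)).
    pose proof (H 0%nat ltac:(lia)). lra.
Qed.

Lemma Cprod_lt_0 f : Cprod_lt 0 f = RtoC 1.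
Proof. reflexivity. Qed.

Lemma Cprod_lt_S n f : Cprod_lt (S n) f = Cmult (f 0%nat) (Cprod_lt n (fun j => f (S j))).
Proof. unfold Cprod_lt. rewrite seq0_S. simpl. rewrite map_map. auto. Qed.

Lemma Cprod_lt_ext n f g : (forall j, (j < n)%nat -> f j = g j) -> Cprod_lt n f = Cprod_lt n g.
Proof.
  revert f g; induction n; intros f g H; auto.
  rewrite !Cprod_lt_S, H by lia. f_equal. apply IHn. intros; apply H; lia.
Qed.

Lemma Cprod_lt_mult n f g :
  Cprod_lt n (fun j => Cmult (f j) (g j)) = Cmult (Cprod_lt n f) (Cprod_lt n g).
Proof.
  revert f g; induction n; intros f g. rewrite !Cprod_lt_0. ring.
  rewrite !Cprod_lt_S, IHn. ring.
Qed.

Lemma Cprod_lt_neq0 n f : (forall j, (j < n)%nat -> f j <> RtoC 0) -> Cprod_lt n f <> RtoC 0.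
Proof.
  revert f; induction n; intros f H.
  - rewrite Cprod_lt_0. intros E. injection E. lra.
  - rewrite Cprod_lt_S. apply Cmult_neq_0; [apply H; lia|].
    apply (IHn (fun j => f (S j))). intros; apply H; lia.
Qed.

Lemma Cprod_lt_div n a b : (forall j, (j < n)%nat -> b j <> RtoC 0) ->
  Cdiv (Cprod_lt n a) (Cprod_lt n b) = Cprod_lt n (fun j => Cdiv (a j) (b j)).
Proof.
  revert a b; induction n; intros a b H.
  - rewrite !Cprod_lt_0. field.
  - rewrite !Cprod_lt_S, <- IHn by (intros; apply H; lia).
    assert (H0 : b 0%nat <> RtoC 0) by (apply H; lia).
    assert (H1 : Cprod_lt n (fun j => b (S j)) <> RtoC 0)
      by (apply Cprod_lt_neq0; intros; apply H; lia).
    field. split; auto.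
Qed.

Lemma Cprod_lt_factor n f j : (j < n)%nat ->
  exists K, forall v, Cprod_lt n (fun k => if Nat.eqb k j then v else f k) = Cmult v K.
Proof.
  revert f j; induction n; intros f j Hj. lia.
  destruct j.
  - exists (Cprod_lt n (fun k => f (S k))). intros w. rewrite Cprod_lt_S. auto.
  - destruct (IHn (fun k => f (S k)) j) as [K HK]. lia.
    exists (Cmult (f 0%nat) K). intros w. rewrite Cprod_lt_S. simpl. rewrite (HK w). ring.
Qed.

Lemma ce_add a b : ce (a + b) = Cmult (ce a) (ce b).
Proof. unfold ce; apply C_ext; simpl; rewrite ?cos_plus, ?sin_plus; ring. Qed.

Lemma ce_0 : ce 0 = RtoC 1.
Proof. unfold ce; rewrite cos_0, sin_0; auto. Qed.

Lemma ce_pow a k : Cpow (ce a) k = ce (INR k * a).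
Proof.
  induction k. simpl. rewrite Rmult_0_l, ce_0; auto.
  simpl Cpow. rewrite IHk, <- ce_add. f_equal. rewrite S_INR; ring.
Qed.

Lemma ce_half y : ce y = Cpow (ce (y / 2)) 2.
Proof. rewrite ce_pow. f_equal. simpl. field. Qed.

Lemma ce_neq0 a : ce a <> RtoC 0.
Proof.
  unfold ce. intros H. injection H; intros H1 H2.
  pose proof (sin2_cos2 a) as E. rewrite H1, H2 in E. unfold Rsqr in E. lra.
Qed.

Lemma ce_sub a b : ce (a - b) = Cdiv (ce a) (ce b).
Proof.
  replace (ce (a - b)) with (Cmult (Cmult (ce (a - b)) (ce b)) (Cinv (ce b)))
    by (field; apply ce_neq0).
  rewrite <- ce_add. replace (a - b + b) with a by ring. reflexivity.
Qed.

Lemma ce_neq1 y : 0 < Rabs y < 2 * PI -> ce y <> RtoC 1.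
Proof.
  intros Hy H. unfold ce in H. injection H; intros Hs Hc.
  assert (Hpos : forall z, 0 < z < 2 * PI -> cos z = 1 -> sin z <> 0).
  { intros z Hz Hcz Hsz. destruct (Rtotal_order z PI) as [Hl|[He|Hg]].
    - assert (0 < sin z) by (apply sin_gt_0; lra). lra.
    - subst. rewrite cos_PI in Hcz. lra.
    - assert (sin z < 0) by (apply sin_lt_0; lra). lra. }
  destruct (Rcase_abs y) as [Hn|Hp].
  - rewrite Rabs_left in Hy by auto. apply (Hpos (- y)); [lra|rewrite cos_neg; auto|].
    rewrite sin_neg, Hs. ring.
  - rewrite Rabs_right in Hy by auto. apply (Hpos y); auto.
Qed.

Lemma Cprod_lt_ce n f : Cprod_lt n (fun j => ce (f j)) = ce (Rsum_lt n f).
Proof.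
  revert f; induction n; intros f. rewrite Cprod_lt_0, Rsum_lt_0, ce_0; auto.
  rewrite Cprod_lt_S, Rsum_lt_S, IHn, ce_add; auto.
Qed.

Definition is_Cderive (f : R -> C) (y : R) (v : C) : Prop :=
  is_derive (fun x => fst (f x)) y (fst v) /\ is_derive (fun x => snd (f x)) y (snd v).

Lemma is_Cderive_val f y a b : a = b -> is_Cderive f y a -> is_Cderive f y b.
Proof. intros ->; auto. Qed.

Lemma is_Cderive_ext_loc f g y a :
  locally y (fun x => f x = g x) -> is_Cderive f y a -> is_Cderive g y a.
Proof.
  intros H [H1 H2]; split; (eapply is_derive_ext_loc; [|eassumption]);
    (eapply filter_imp; [|exact H]); intros x Hx; simpl; rewrite Hx; auto.
Qed.

Lemma is_Cderive_ext f g y a : (forall x, f x = g x) -> is_Cderive f y a -> is_Cderive g y a.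
Proof. intros H. apply is_Cderive_ext_loc. apply filter_forall. auto. Qed.

Lemma is_Cderive_const c y : is_Cderive (fun _ => c) y (RtoC 0).
Proof. split; exact (is_derive_const _ y). Qed.

Lemma is_Cderive_plus f g y a b : is_Cderive f y a -> is_Cderive g y b ->
  is_Cderive (fun x => Cplus (f x) (g x)) y (Cplus a b).
Proof.
  intros [H1 H2] [H3 H4]; split;
    [exact (is_derive_plus _ _ _ _ _ H1 H3) | exact (is_derive_plus _ _ _ _ _ H2 H4)].
Qed.

Lemma is_Cderive_minus f g y a b : is_Cderive f y a -> is_Cderive g y b ->
  is_Cderive (fun x => Cminus (f x) (g x)) y (Cminus a b).
Proof.
  intros [H1 H2] [H3 H4]; split;
    [exact (is_derive_minus _ _ _ _ _ H1 H3) | exact (is_derive_minus _ _ _ _ _ H2 H4)].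
Qed.

Lemma is_Cderive_mult f g y a b : is_Cderive f y a -> is_Cderive g y b ->
  is_Cderive (fun x => Cmult (f x) (g x)) y (Cplus (Cmult a (g y)) (Cmult (f y) b)).
Proof.
  intros [H1 H2] [H3 H4].
  assert (M : forall (p q : R -> R) dp dq, is_derive p y dp -> is_derive q y dq ->
            is_derive (fun x => p x * q x) y (dp * q y + p y * dq))
    by (intros p q dp dq Hp Hq; exact (is_derive_mult p q y dp dq Hp Hq Rmult_comm)).
  split; simpl.
  - replace (fst a * fst (g y) - snd a * snd (g y) + (fst (f y) * fst b - snd (f y) * snd b))
      with ((fst a * fst (g y) + fst (f y) * fst b) - (snd a * snd (g y) + snd (f y) * snd b))
      by ring.
    exact (is_derive_minus _ _ _ _ _ (M _ _ _ _ H1 H3) (M _ _ _ _ H2 H4)).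
  - replace (fst a * snd (g y) + snd a * fst (g y) + (fst (f y) * snd b + snd (f y) * fst b))
      with ((fst a * snd (g y) + fst (f y) * snd b) + (snd a * fst (g y) + snd (f y) * fst b))
      by ring.
    exact (is_derive_plus _ _ _ _ _ (M _ _ _ _ H1 H4) (M _ _ _ _ H2 H3)).
Qed.

Lemma is_Cderive_scal_arg f t y a :
  is_Cderive f (t * y) a -> is_Cderive (fun x => f (t * x)) y (Cmult (RtoC t) a).
Proof.
  assert (L : forall p dp, is_derive p (t * y) dp -> is_derive (fun x => p (t * x)) y (t * dp)).
  { intros p dp Hp. assert (Hl : is_derive (fun x => t * x) y t) by (auto_derive; auto; ring).
    exact (is_derive_comp p (fun x => t * x) y dp t Hp Hl). }
  intros [H1 H2]; split; simpl.
  - replace (t * fst a - 0 * snd a) with (t * fst a) by ring. apply (L (fun x => fst (f x))); auto.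
  - replace (t * snd a + 0 * fst a) with (t * snd a) by ring. apply (L (fun x => snd (f x))); auto.
Qed.

Lemma is_Cderive_ce a y :
  is_Cderive (fun x => ce (a * x)) y (Cmult (Cmult Ci (RtoC a)) (ce (a * y))).
Proof.
  assert (H : is_Cderive (fun x => ce x) (a * y) (Cmult Ci (ce (a * y)))).
  { split; simpl.
    - replace (0 * cos (a * y) - 1 * sin (a * y)) with (- sin (a * y)) by ring.
      apply is_derive_cos.
    - replace (0 * sin (a * y) + 1 * cos (a * y)) with (cos (a * y)) by ring.
      apply is_derive_sin. }
  eapply is_Cderive_val; [|exact (is_Cderive_scal_arg _ a y _ H)]. ring.
Qed.

Lemma is_Cderive_inv f y a : f y <> RtoC 0 -> is_Cderive f y a ->
  is_Cderive (fun x => Cinv (f x)) y (Copp (Cdiv a (Cmult (f y) (f y)))).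
Proof.
  intros Hnz [H1 H2].
  assert (Hn : fst (f y) ^ 2 + snd (f y) ^ 2 <> 0).
  { intros Hc. apply Hnz. destruct (f y) as [p q]; simpl in *.
    assert (p = 0) by nra. assert (q = 0) by nra. subst; auto. }
  assert (Hd : is_derive (fun x => fst (f x) ^ 2 + snd (f x) ^ 2) y
                 (INR 2 * fst a * fst (f y) ^ 1 + INR 2 * snd a * snd (f y) ^ 1))
    by exact (is_derive_plus _ _ _ _ _ (is_derive_pow _ 2 _ _ H1) (is_derive_pow _ 2 _ _ H2)).
  pose proof (is_derive_div _ _ y _ _ H1 Hd Hn) as D1.
  pose proof (is_derive_div _ _ y _ _ (is_derive_opp _ _ _ H2) Hd Hn) as D2.
  assert (Hsq : forall p q : R, p * p + q * q <> 0 ->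
     (p * p - q * q) * (p * p - q * q) + (p * q + q * p) * (p * q + q * p) <> 0).
  { intros p q Hpq. replace ((p * p - q * q) * (p * p - q * q) + (p * q + q * p) * (p * q + q * p))
      with ((p * p + q * q) * (p * p + q * q)) by ring.
    apply Rmult_integral_contrapositive; auto. }
  set (v := Copp (Cdiv a (Cmult (f y) (f y)))).
  split; [match type of D1 with is_derive _ _ ?d => replace (fst v) with (d : R); [exact D1|] end
         |match type of D2 with is_derive _ _ ?d => replace (snd v) with (d : R); [exact D2|] end];
    unfold v; destruct a as [a1 a2], (f y) as [p q]; simpl in *; unfold opp; simpl;
    (field; split; [apply Hsq|]; contradict Hn; rewrite <- Hn; ring).
Qed.

Lemma is_Cderive_pow f y a k : is_Cderive f y a ->
  is_Cderive (fun x => Cpow (f x) k) y (Cmult (Cmult (RtoC (INR k)) (Cpow (f y) (pred k))) a).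
Proof.
  intros H. induction k as [|k IHk].
  - apply (is_Cderive_val _ _ (RtoC 0)); [apply C_ext; simpl; ring|].
    exact (is_Cderive_const (RtoC 1) y).
  - eapply is_Cderive_val; [|apply is_Cderive_mult; [exact H|exact IHk]].
    destruct k as [|k]; [simpl; ring|].
    simpl pred. change (Cpow (f y) (S k)) with (Cmult (f y) (Cpow (f y) k)).
    fold (Cpow (f y) k). rewrite !S_INR, !RtoC_plus.
    set (P := Cpow (f y) k); set (r := INR k). ring.
Qed.

Lemma is_Cderive_Derive f y a : is_Cderive f y a ->
  (Derive (fun x => fst (f x)) y, Derive (fun x => snd (f x)) y) = a.
Proof. intros [H1 H2]. destruct a. f_equal; apply is_derive_unique; assumption. Qed.

Definition peval (P : nat -> R) (B : nat) (w : C) : C :=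
  Csum (map (fun a => Cmult (RtoC (P a)) (Cpow w a)) (seq 0 B)).

Definition vanish_from (P : nat -> R) (B : nat) : Prop := forall a, (B <= a)%nat -> P a = 0.

Lemma peval_0 P w : peval P 0 w = RtoC 0.
Proof. reflexivity. Qed.

Lemma peval_S P B w : peval P (S B) w = Cplus (peval P B w) (Cmult (RtoC (P B)) (Cpow w B)).
Proof. unfold peval. rewrite seq_S, map_app, Csum_app. simpl. rewrite Cplus_0_r. auto. Qed.

Lemma peval_widen P B B' w : vanish_from P B -> (B <= B')%nat -> peval P B' w = peval P B w.
Proof.
  intros HP Hle. induction Hle as [|B' Hle IH]; auto.
  rewrite peval_S, IH, HP by lia. rewrite Cmult_0_l, Cplus_0_r. auto.
Qed.

Lemma peval_plus P Q B w : peval (fun a => P a + Q a) B w = Cplus (peval P B w) (peval Q B w).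
Proof. induction B. rewrite !peval_0. ring. rewrite !peval_S, IHB, RtoC_plus. ring. Qed.

Lemma peval_minus P Q B w : peval (fun a => P a - Q a) B w = Cminus (peval P B w) (peval Q B w).
Proof. induction B. rewrite !peval_0. ring. rewrite !peval_S, IHB, RtoC_minus. ring. Qed.

Lemma peval_scal c P B w : peval (fun a => c * P a) B w = Cmult (RtoC c) (peval P B w).
Proof. induction B. rewrite !peval_0. ring. rewrite !peval_S, IHB, RtoC_mult. ring. Qed.

Definition pevalR (P : nat -> R) (B : nat) (w : R) : R := Rsum_lt B (fun a => P a * w ^ a).

Lemma peval_RtoC P B w : peval P B (RtoC w) = RtoC (pevalR P B w).
Proof.
  unfold peval, pevalR, Rsum_lt. rewrite <- Csum_RtoC. f_equal. apply map_ext. intros a.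
  rewrite Cpow_RtoC, RtoC_mult. auto.
Qed.

Definition mulX2 (P : nat -> R) (a : nat) : R :=
  match a with O => 0 | S O => 0 | S (S a') => P a' end.

Lemma vanish_from_mulX2 P B : vanish_from P B -> vanish_from (mulX2 P) (S (S B)).
Proof. intros H a Ha. destruct a as [|[|a]]; simpl; auto; apply H; lia. Qed.

Lemma peval_mulX2 P B w : peval (mulX2 P) (S (S B)) w = Cmult (Cpow w 2) (peval P B w).
Proof.
  induction B.
  - rewrite !peval_S, peval_0. simpl. apply C_ext; simpl; ring.
  - rewrite peval_S, IHB, peval_S. simpl mulX2. simpl Cpow. ring.
Qed.

Definition mul_1_sub_X2 (P : nat -> R) (a : nat) : R := P a - mulX2 P a.

Lemma vanish_from_mul_1_sub_X2 P B : vanish_from P B -> vanish_from (mul_1_sub_X2 P) (S (S B)).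
Proof.
  intros H a Ha. unfold mul_1_sub_X2. rewrite H, (vanish_from_mulX2 P B H) by lia. ring.
Qed.

Lemma peval_mul_1_sub_X2 P B w : vanish_from P B ->
  peval (mul_1_sub_X2 P) (S (S B)) w = Cmult (Cminus (RtoC 1) (Cpow w 2)) (peval P B w).
Proof.
  intros H. unfold mul_1_sub_X2. rewrite peval_minus, peval_mulX2, (peval_widen P B) by (auto; lia).
  ring.
Qed.

Lemma peval_iter_mul_1_sub_X2 P B w k : vanish_from P B ->
  vanish_from (Nat.iter k mul_1_sub_X2 P) (B + 2 * k) /\
  peval (Nat.iter k mul_1_sub_X2 P) (B + 2 * k) w =
    Cmult (Cpow (Cminus (RtoC 1) (Cpow w 2)) k) (peval P B w).
Proof.
  intros H. induction k as [|k [IH1 IH2]].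
  - simpl. rewrite Nat.add_0_r. split; auto. ring.
  - replace (B + 2 * S k)%nat with (S (S (B + 2 * k))) by lia. simpl Nat.iter. split.
    + apply vanish_from_mul_1_sub_X2; auto.
    + rewrite peval_mul_1_sub_X2, IH2 by auto. simpl Cpow. ring.
Qed.

(** Coefficients of [(w/2) P'(w)]: on [P(e^{iy/2})] this is the action of [-i d/dy]. *)
Definition euler_half (P : nat -> R) (a : nat) : R := INR a / 2 * P a.

Lemma vanish_from_euler_half P B : vanish_from P B -> vanish_from (euler_half P) B.
Proof. intros H a Ha. unfold euler_half. rewrite H; auto; ring. Qed.

Lemma is_Cderive_peval_ce P B y :
  is_Cderive (fun x => peval P B (ce (x / 2))) y (Cmult Ci (peval (euler_half P) B (ce (y / 2)))).
Proof.
  induction B.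
  - apply (is_Cderive_val _ _ (RtoC 0)); [rewrite peval_0; ring|].
    apply (is_Cderive_ext (fun _ => RtoC 0)); [intros; rewrite peval_0; auto|].
    apply is_Cderive_const.
  - apply (is_Cderive_ext (fun x => Cplus (peval P B (ce (x / 2)))
                                         (Cmult (RtoC (P B)) (ce ((INR B / 2) * x))))).
    { intros x. rewrite peval_S, ce_pow. do 3 f_equal. field. }
    eapply is_Cderive_val;
      [|apply is_Cderive_plus;
          [exact IHB|apply is_Cderive_mult; [apply is_Cderive_const|apply is_Cderive_ce]]].
    rewrite peval_S, ce_pow. replace (INR B * (y / 2)) with ((INR B / 2) * y) by field.
    unfold euler_half. rewrite RtoC_mult. ring.
Qed.

(** * The one-variable factor of the model function and its derivatives *)

Fixpoint phi_num (m : nat) : nat -> R :=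
  match m with
  | O => fun a => if Nat.eqb a 1 then 1 else 0
  | S m' => fun a => euler_half (phi_num m') a - mulX2 (euler_half (phi_num m')) a
                     + INR (S m') * mulX2 (phi_num m') a
  end.

(** [phi m y = (-i d/dy)^m (e^{iy/2} / (1 - e^{iy}))], written over the common denominator
    [(1 - e^{iy})^{m+1}] with a numerator polynomial in [e^{iy/2}]. *)
Definition phi (m : nat) (y : R) : C :=
  Cmult (peval (phi_num m) (2 * m + 2) (ce (y / 2))) (Cpow (Cinv (Cminus (RtoC 1) (ce y))) (S m)).

Lemma vanish_from_phi_num m : vanish_from (phi_num m) (2 * m + 2).
Proof.
  induction m; intros a Ha; simpl.
  - destruct (Nat.eqb_spec a 1); auto; lia.
  - pose proof (vanish_from_euler_half _ _ IHm) as H1.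
    rewrite H1, (vanish_from_mulX2 _ _ H1), (vanish_from_mulX2 _ _ IHm) by lia. ring.
Qed.

Lemma peval_phi_num_0 w : peval (phi_num 0) 2 w = w.
Proof. rewrite !peval_S, peval_0. simpl. apply C_ext; simpl; ring. Qed.

Lemma peval_phi_num_S m w :
  peval (phi_num (S m)) (2 * S m + 2) w =
  Cplus (Cmult (peval (euler_half (phi_num m)) (2 * m + 2) w) (Cminus (RtoC 1) (Cpow w 2)))
        (Cmult (Cmult (RtoC (INR (S m))) (Cpow w 2)) (peval (phi_num m) (2 * m + 2) w)).
Proof.
  change (phi_num (S m)) with (fun a => euler_half (phi_num m) a - mulX2 (euler_half (phi_num m)) a
                                        + INR (S m) * mulX2 (phi_num m) a).
  rewrite peval_plus, peval_minus, peval_scal.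
  replace (2 * S m + 2)%nat with (S (S (2 * m + 2))) by lia.
  rewrite !peval_mulX2, (peval_widen (euler_half (phi_num m)) (2 * m + 2));
    [ring | apply vanish_from_euler_half, vanish_from_phi_num | lia].
Qed.

Lemma is_Cderive_phi m y : ce y <> RtoC 1 -> is_Cderive (phi m) y (Cmult Ci (phi (S m) y)).
Proof.
  intros Hy. pose proof (Csub1_neq0 _ Hy) as HD.
  assert (HV : is_Cderive (fun x => Cinv (Cminus (RtoC 1) (ce x))) y
                  (Copp (Cdiv (Copp (Cmult (Cmult Ci (RtoC 1)) (ce (1 * y))))
                   (Cmult (Cminus (RtoC 1) (ce y)) (Cminus (RtoC 1) (ce y)))))).
  { apply is_Cderive_inv; auto.
    apply (is_Cderive_ext (fun x => Cminus (RtoC 1) (ce (1 * x))));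
      [intros x; rewrite Rmult_1_l; auto|].
    eapply is_Cderive_val; [|apply is_Cderive_minus; [apply is_Cderive_const|apply is_Cderive_ce]].
    ring. }
  unfold phi. eapply is_Cderive_val;
    [|apply is_Cderive_mult; [apply is_Cderive_peval_ce|apply is_Cderive_pow; exact HV]].
  rewrite peval_phi_num_S, Rmult_1_l. clear HV.
  rewrite (ce_half y) in *. set (w := ce (y / 2)) in *.
  set (E := peval (phi_num m) (2 * m + 2) w).
  set (H := peval (euler_half (phi_num m)) (2 * m + 2) w).
  simpl pred. set (Dn := Cminus (RtoC 1) (Cpow w 2)) in *. set (P := Cpow (Cinv Dn) m).
  simpl Cpow. fold P. rewrite S_INR, RtoC_plus.
  field. auto.
Qed.

Lemma locally_neq (f : R -> R) x0 c : continuity_pt f x0 -> f x0 <> c ->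
  locally x0 (fun x => f x <> c).
Proof.
  intros Hc Hne.
  assert (He : Rabs (f x0 - c) > 0) by (apply Rabs_pos_lt; lra).
  destruct (Hc _ He) as [alp [Ha H]].
  exists (mkposreal alp Ha). intros y Hy Hfy.
  destruct (Req_dec y x0) as [->|Hyx]; [auto|].
  assert (Hd : R_dist (f y) (f x0) < Rabs (f x0 - c)).
  { apply (H y). split; [split; [constructor|auto]|]. exact Hy. }
  unfold R_dist in Hd. rewrite Hfy, Rabs_minus_sym in Hd. lra.
Qed.

Lemma locally_ce_neq1 t x0 : ce (t * x0) <> RtoC 1 -> locally x0 (fun x => ce (t * x) <> RtoC 1).
Proof.
  intros H. unfold ce in *.
  destruct (Req_dec (cos (t * x0)) 1) as [Hc|Hc].
  - assert (Hs : sin (t * x0) <> 0) by (intros Hs; apply H; rewrite Hc, Hs; auto).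
    eapply filter_imp; [|apply (locally_neq (fun x => sin (t * x))); [reg|exact Hs]].
    intros x Hx He. apply Hx. injection He; auto.
  - eapply filter_imp; [|apply (locally_neq (fun x => cos (t * x))); [reg|exact Hc]].
    intros x Hx He. apply Hx. injection He; auto.
Qed.

Definition scaled_phi (t : R) (m : nat) (x : R) : C := Cmult (RtoC (t ^ m)) (phi m (t * x)).

Lemma is_Cderive_scaled_phi t m x : ce (t * x) <> RtoC 1 ->
  is_Cderive (scaled_phi t m) x (Cmult Ci (scaled_phi t (S m) x)).
Proof.
  intros H. unfold scaled_phi.
  eapply is_Cderive_val;
    [|apply is_Cderive_mult;
        [apply is_Cderive_const|apply is_Cderive_scal_arg, is_Cderive_phi; auto]].
  simpl pow. rewrite RtoC_mult. ring.
Qed.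

Definition regular (n : nat) (t : R) (th : nat -> R) : Prop :=
  forall k, (k < n)%nat -> ce (t * th k) <> RtoC 1.

Definition scaled_phi_prod (n : nat) (t : R) (ms : nat -> nat) (th : nat -> R) : C :=
  Cprod_lt n (fun k => scaled_phi t (ms k) (th k)).

Lemma scaled_phi_prod_ext n t ms ms' th : (forall k, (k < n)%nat -> ms k = ms' k) ->
  scaled_phi_prod n t ms th = scaled_phi_prod n t ms' th.
Proof. intros H. unfold scaled_phi_prod. apply Cprod_lt_ext. intros; rewrite H; auto. Qed.

Lemma Dpart_scaled_phi_prod n t j g ms : (j < n)%nat ->
  (forall th, regular n t th -> g th = scaled_phi_prod n t ms th) ->
  forall th, regular n t th ->
    Dpart j g th = scaled_phi_prod n t (fun k => if Nat.eqb k j then S (ms j) else ms k) th.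
Proof.
  intros Hj Hg th Hth.
  destruct (Cprod_lt_factor n (fun k => scaled_phi t (ms k) (th k)) j Hj) as [K HK].
  assert (Hloc : locally (th j) (fun x => Cmult (scaled_phi t (ms j) x) K = g (upd th j x))).
  { eapply filter_imp; [|apply locally_ce_neq1, Hth; auto].
    intros x Hx. rewrite Hg.
    - unfold scaled_phi_prod. rewrite <- HK. apply Cprod_lt_ext. intros k Hk. unfold upd.
      destruct (Nat.eqb_spec k j); subst; auto.
    - intros k Hk. unfold upd. destruct (Nat.eqb_spec k j); subst; auto. }
  assert (HD : is_Cderive (fun x => g (upd th j x)) (th j)
                 (Cmult (Cmult Ci (scaled_phi t (S (ms j)) (th j))) K)).
  { eapply is_Cderive_ext_loc; [exact Hloc|].
    eapply is_Cderive_val;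
      [|apply is_Cderive_mult; [apply is_Cderive_scaled_phi, Hth; auto|apply is_Cderive_const]].
    cbv beta. ring. }
  unfold Dpart. rewrite (is_Cderive_Derive _ _ _ HD).
  unfold scaled_phi_prod. rewrite (Cprod_lt_ext n _ (fun k => if Nat.eqb k j
      then scaled_phi t (S (ms j)) (th j) else scaled_phi t (ms k) (th k))).
  - rewrite HK. apply C_ext; simpl; ring.
  - intros k Hk. destruct (Nat.eqb_spec k j); subst; auto.
Qed.

Lemma iter_Dpart_scaled_phi_prod n t j g ms a : (j < n)%nat ->
  (forall th, regular n t th -> g th = scaled_phi_prod n t ms th) ->
  forall th, regular n t th ->
    iter_op a (Dpart j) g th =
    scaled_phi_prod n t (fun k => if Nat.eqb k j then (ms j + a)%nat else ms k) th.
Proof.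
  intros Hj Hg. induction a as [|a IHa]; intros th Hth.
  - simpl. rewrite Hg; auto. apply scaled_phi_prod_ext. intros k _.
    destruct (Nat.eqb_spec k j); subst; auto; lia.
  - simpl iter_op. rewrite (Dpart_scaled_phi_prod n t j _ _ Hj IHa th Hth).
    apply scaled_phi_prod_ext. intros k _.
    destruct (Nat.eqb_spec k j); subst; auto. rewrite Nat.eqb_refl. lia.
Qed.

Lemma Dmulti_from_scaled_phi_prod n t r : forall j g ms, (j + length r <= n)%nat ->
  (forall th, regular n t th -> g th = scaled_phi_prod n t ms th) ->
  forall th, regular n t th ->
    Dmulti_from j r g th =
    scaled_phi_prod n t (fun k => (ms k + if Nat.leb j k then nth (k - j) r 0 else 0)%nat) th.
Proof.
  induction r as [|a r IH]; intros j g ms Hlen Hg th Hth.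
  - simpl. rewrite Hg; auto. apply scaled_phi_prod_ext. intros k _.
    destruct (Nat.leb j k), (k - j)%nat; simpl; lia.
  - simpl Dmulti_from. simpl length in Hlen.
    rewrite (iter_Dpart_scaled_phi_prod n t j _
               (fun k => (ms k + if Nat.leb (S j) k then nth (k - S j) r 0 else 0)%nat));
      [| lia | intros th' Hth'; apply IH; auto; lia | auto].
    apply scaled_phi_prod_ext. intros k _. destruct (Nat.eqb_spec k j).
    + subst. rewrite Nat.leb_refl, Nat.sub_diag.
      replace (Nat.leb (S j) j) with false by (symmetry; apply Nat.leb_gt; lia). simpl. lia.
    + destruct (Nat.leb_spec (S j) k); destruct (Nat.leb_spec j k); try lia; auto.
      replace (k - j)%nat with (S (k - S j)) by lia. reflexivity.
Qed.

Lemma Fmodel_scaled_phi_prod n t th :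
  regular n t th -> Fmodel n t th = scaled_phi_prod n t (fun _ => 0%nat) th.
Proof.
  intros Hth. unfold Fmodel, scaled_phi_prod.
  rewrite Rsum_lt_scal, <- Cprod_lt_ce, Cprod_lt_div.
  - apply Cprod_lt_ext. intros j Hj. unfold scaled_phi, phi. simpl pow.
    change (2 * 0 + 2)%nat with 2%nat. rewrite peval_phi_num_0.
    replace (t / 2 * th j) with (t * th j / 2) by field. simpl Cpow. unfold Cdiv. ring.
  - intros j Hj. apply Csub1_neq0, Hth; auto.
Qed.

Definition phi_prod (n : nat) (r : list nat) (y : nat -> R) : C :=
  Cprod_lt n (fun j => phi (nth j r 0%nat) (y j)).

Lemma Cprod_lt_pow_nth t r : forall n, length r = n ->
  Cprod_lt n (fun j => RtoC (t ^ nth j r 0%nat)) = RtoC (t ^ lsum r).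
Proof.
  induction r as [|a r IH]; intros n Hl; simpl in Hl; subst; auto.
  rewrite Cprod_lt_S. simpl nth. rewrite (IH (length r)) by auto. simpl lsum.
  rewrite pow_add, RtoC_mult. auto.
Qed.

Lemma Dmulti_Fmodel n t r th : length r = n -> regular n t th ->
  Dmulti r (Fmodel n t) th =
  Cmult (RtoC (t ^ lsum r)) (phi_prod n r (fun j => t * th j)).
Proof.
  intros Hl Hth. unfold Dmulti.
  rewrite (Dmulti_from_scaled_phi_prod n t r 0 _ (fun _ => 0%nat));
    [| lia | intros; apply Fmodel_scaled_phi_prod; auto | auto].
  unfold scaled_phi_prod, scaled_phi. rewrite Cprod_lt_mult, <- (Cprod_lt_pow_nth t r n Hl).
  f_equal; apply Cprod_lt_ext; intros k _; simpl; rewrite Nat.sub_0_r; auto.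
Qed.

Lemma NoDup_flat_map {A B} (f : A -> list B) l :
  NoDup l -> (forall x, In x l -> NoDup (f x)) ->
  (forall x y z, In x l -> In y l -> In z (f x) -> In z (f y) -> x = y) ->
  NoDup (flat_map f l).
Proof.
  induction l as [|a l IH]; intros Hl Hf Hd; simpl; [constructor|].
  inversion Hl; subst. apply NoDup_app.
  - apply Hf; simpl; auto.
  - apply IH; auto; intros; [apply Hf | eapply Hd]; simpl; eauto.
  - intros z Hz Hz'. apply in_flat_map in Hz'. destruct Hz' as [y [Hy Hzy]].
    assert (a = y) by (eapply Hd; simpl; eauto). subst. contradiction.
Qed.

Lemma NoDup_map_cons {A} (a : A) l : NoDup l -> NoDup (map (cons a) l).
Proof.
  apply NoDup_map_NoDup_ForallPairs. intros x y _ _ E. injection E; auto.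
Qed.

Lemma NoDup_flat_map_cons {A} (l : list A) (F : A -> list (list A)) :
  NoDup l -> (forall a, NoDup (F a)) -> NoDup (flat_map (fun a => map (cons a) (F a)) l).
Proof.
  intros Hl HF. apply NoDup_flat_map; auto.
  - intros; apply NoDup_map_cons; auto.
  - intros x y z _ _ Hx Hy. apply in_map_iff in Hx, Hy.
    destruct Hx as [? [<- _]], Hy as [? [E _]]. injection E; auto.
Qed.

Lemma multi_spec n d r : In r (multi n d) -> length r = n /\ lsum r = d.
Proof.
  revert d r; induction n; intros d r H.
  - destruct d; simpl in H; [destruct H as [<-|[]]; auto|contradiction].
  - change (In r (flat_map (fun a => map (cons a) (multi n (d - a))) (seq 0 (S d)))) in H.
    apply in_flat_map in H. destruct H as [a [Ha H]]. apply in_map_iff in H.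
    destruct H as [r' [<- H]]. apply in_seq in Ha. destruct (IHn _ _ H). simpl. split; auto. lia.
Qed.

Lemma multi_NoDup n d : NoDup (multi n d).
Proof.
  revert d; induction n; intros d.
  - destruct d; simpl; repeat constructor; auto.
  - apply NoDup_flat_map_cons; auto. apply seq_NoDup.
Qed.

Lemma multi_1 s : multi 1 s = [[s]].
Proof.
  change (multi 1 s) with (flat_map (fun a => map (cons a) (multi 0 (s - a))) (seq 0 (S s))).
  assert (Hlt : forall l, (forall a, In a l -> (a < s)%nat) ->
                  flat_map (fun a => map (cons a) (multi 0 (s - a))) l = []).
  { induction l as [|a l IH]; intros H; simpl; auto.
    assert (a < s)%nat by (apply H; simpl; auto).
    destruct (s - a)%nat eqn:E; [lia|]. apply IH. intros; apply H; simpl; auto. }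
  rewrite seq_S, flat_map_app, Hlt by (intros a Ha; apply in_seq in Ha; lia).
  simpl. rewrite Nat.sub_diag. reflexivity.
Qed.

Lemma nth_le_lsum r j : (nth j r 0 <= lsum r)%nat.
Proof. revert j; induction r; intros j; destruct j; simpl; try lia. specialize (IHr j). lia. Qed.

Lemma In_le_lsum l x : In x l -> (x <= lsum l)%nat.
Proof.
  induction l; simpl; intros H; [contradiction|].
  destruct H; subst; [lia|]. specialize (IHl H); lia.
Qed.

Lemma In_lt_lsum l x : In x l -> (2 <= length l)%nat -> (forall y, In y l -> (1 <= y)%nat) ->
  (x < lsum l)%nat.
Proof.
  destruct l as [|a [|b l]]; simpl; intros Hx Hl Hy; try contradiction; try lia.
  pose proof (Hy a (or_introl eq_refl)). pose proof (Hy b (or_intror (or_introl eq_refl))).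
  destruct Hx as [<-|[<-|Hx]]; simpl; try lia.
  pose proof (In_le_lsum _ _ Hx). lia.
Qed.

Fixpoint box (n A : nat) : list (list nat) :=
  match n with
  | O => [[]]
  | S n' => flat_map (fun a => map (cons a) (box n' A)) (seq 0 A)
  end.

Lemma box_cons n A a al : (a < A)%nat -> In al (box n A) -> In (a :: al) (box (S n) A).
Proof. intros Ha H. apply in_flat_map. exists a. split; [apply in_seq; lia|apply in_map; auto]. Qed.

Lemma box_spec n A al : In al (box n A) ->
  length al = n /\ forall j, (j < n)%nat -> (nth j al 0 < A)%nat.
Proof.
  revert al; induction n; intros al H; simpl in H.
  - destruct H as [<-|[]]. split; auto. intros; lia.
  - apply in_flat_map in H. destruct H as [a [Ha H]]. apply in_map_iff in H.
    destruct H as [al' [<- H]]. apply in_seq in Ha. destruct (IHn al' H) as [H1 H2].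
    split; [simpl; auto|]. intros [|j] Hj; simpl; [lia|apply H2; lia].
Qed.

Lemma box_NoDup n A : NoDup (box n A).
Proof.
  induction n; simpl; [repeat constructor; auto|].
  apply NoDup_flat_map_cons; auto. apply seq_NoDup.
Qed.

Lemma Cprod_lt_Csum n A (f : nat -> nat -> C) :
  Cprod_lt n (fun j => Csum (map (f j) (seq 0 A))) =
  Csum (map (fun al => Cprod_lt n (fun j => f j (nth j al 0%nat))) (box n A)).
Proof.
  revert f; induction n; intros f.
  - rewrite Cprod_lt_0. simpl. rewrite Cprod_lt_0. ring.
  - rewrite Cprod_lt_S, (IHn (fun j => f (S j))).
    change (box (S n) A) with (flat_map (fun a => map (cons a) (box n A)) (seq 0 A)).
    rewrite Csum_map_flat_map, <- Csum_map_scal_r. apply Csum_map_ext_in. intros a _.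
    rewrite map_map, <- Csum_map_scal_l. apply Csum_map_ext_in. intros al _.
    rewrite Cprod_lt_S. reflexivity.
Qed.

(** * Two independence principles *)

Lemma vandermonde {X} (L : list X) (Cf w : X -> C) :
  NoDup L ->
  (forall x y, In x L -> In y L -> w x = w y -> x = y) ->
  (forall x, In x L -> w x <> RtoC 0) ->
  (forall m, (1 <= m <= length L)%nat ->
     Csum (map (fun x => Cmult (Cf x) (Cpow (w x) m)) L) = RtoC 0) ->
  forall x, In x L -> Cf x = RtoC 0.
Proof.
  revert Cf. induction L as [|x0 L IH]; intros Cf Hnd Hinj Hnz Hs x Hx; [contradiction|].
  inversion Hnd as [|? ? Hx0 HndL]; subst.
  (* the power sums of [Cf x * (w x - w x0)] over [L] are differences of those over [x0 :: L] *)
  assert (HL : forall x, In x L -> Cmult (Cf x) (Cminus (w x) (w x0)) = RtoC 0).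
  { apply IH; auto; [intros; apply Hinj; simpl; auto | intros; apply Hnz; simpl; auto|].
    intros m Hm.
    pose proof (Hs (S m) ltac:(simpl; lia)) as E1. pose proof (Hs m ltac:(simpl; lia)) as E2.
    rewrite !Csum_map_cons in E1, E2.
    set (S1 := Csum (map (fun x => Cmult (Cf x) (Cpow (w x) (S m))) L)) in E1.
    set (S2 := Csum (map (fun x => Cmult (Cf x) (Cpow (w x) m)) L)) in E2.
    transitivity (Cminus S1 (Cmult (w x0) S2)).
    - unfold S1, S2. rewrite <- Csum_map_scal_l, <- Csum_map_minus.
      apply Csum_map_ext_in. intros; simpl; ring.
    - change (Cpow (w x0) (S m)) with (Cmult (w x0) (Cpow (w x0) m)) in E1.
      set (P := Cpow (w x0) m) in *.
      replace S1 with (Cminus (RtoC 0) (Cmult (Cf x0) (Cmult (w x0) P))) by (rewrite <- E1; ring).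
      replace S2 with (Cminus (RtoC 0) (Cmult (Cf x0) P)) by (rewrite <- E2; ring). ring. }
  assert (HL' : forall x, In x L -> Cf x = RtoC 0).
  { intros y Hy. apply (Cmult_eq0_reg_r _ (Cminus (w y) (w x0))); auto.
    intros E. apply Hx0. replace x0 with y; auto. apply Hinj; simpl; auto.
    replace (w y) with (Cplus (Cminus (w y) (w x0)) (w x0)) by ring. rewrite E. ring. }
  destruct Hx as [<-|Hx]; auto.
  pose proof (Hs 1%nat ltac:(simpl; lia)) as E1. rewrite Csum_map_cons in E1.
  rewrite (Csum_map_eq0 _ L) in E1 by (intros; rewrite HL'; auto; ring).
  apply (Cmult_eq0_reg_r _ (w x0)); [apply Hnz; simpl; auto|].
  rewrite <- E1. simpl. ring.
Qed.

Lemma Csum_indicator x v l : NoDup l -> In x l ->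
  Csum (map (fun m => if Nat.eqb x m then v else RtoC 0) l) = v.
Proof.
  induction l as [|a l IH]; intros Hnd Hx; [contradiction|].
  inversion Hnd; subst. rewrite Csum_map_cons. destruct Hx as [<-|Hx].
  - rewrite Nat.eqb_refl, Csum_map_eq0; [ring|].
    intros y Hy. destruct (Nat.eqb_spec a y); subst; auto. contradiction.
  - destruct (Nat.eqb_spec x a); [subst; contradiction|]. rewrite IH; auto. ring.
Qed.

Lemma Csum_group_by_head (L : list (list nat)) (g : list nat -> C) K :
  (forall r, In r L -> (hd 0%nat r <= K)%nat) ->
  Csum (map g L) =
  Csum (map (fun m => Csum (map g (filter (fun r => Nat.eqb (hd 0%nat r) m) L))) (seq 0 (S K))).
Proof.
  induction L as [|r L IH]; intros H.
  - symmetry. apply Csum_map_eq0. intros; simpl; auto.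
  - rewrite Csum_map_cons, IH by (intros; apply H; simpl; auto).
    rewrite <- (Csum_indicator (hd 0%nat r) (g r) (seq 0 (S K))) at 1;
      [|apply seq_NoDup|apply in_seq; pose proof (H r (or_introl eq_refl)); lia].
    rewrite <- Csum_map_plus. apply Csum_map_ext_in. intros m _. simpl filter.
    destruct (Nat.eqb (hd 0%nat r) m); simpl; ring.
Qed.

Lemma nth_S_tl (r : list nat) j : nth (S j) r 0%nat = nth j (tl r) 0%nat.
Proof. destruct r; simpl; auto. destruct j; auto. Qed.

(** If the rows [m <= K] of the matrix [p m a] ([a < A]) are linearly independent, so are
    the rows of its [n]-th tensor power. Induction on [n], separating the first index. *)
Lemma tensor_rows_indep (p : nat -> nat -> R) K A
  (Hrow : forall beta : nat -> C,
     (forall a, (a < A)%nat ->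
        Csum (map (fun m => Cmult (beta m) (RtoC (p m a))) (seq 0 (S K))) = RtoC 0) ->
     forall m, (m <= K)%nat -> beta m = RtoC 0) :
  forall n L (b : list nat -> C), NoDup L ->
  (forall r, In r L -> length r = n /\ forall j, (nth j r 0 <= K)%nat) ->
  (forall al, In al (box n A) ->
     Csum (map (fun r => Cmult (b r)
                 (Cprod_lt n (fun j => RtoC (p (nth j r 0%nat) (nth j al 0%nat))))) L) = RtoC 0) ->
  forall r, In r L -> b r = RtoC 0.
Proof.
  induction n as [|n IH]; intros L b Hnd HL Hs r0 Hr0.
  - pose proof (Hs [] ltac:(simpl; auto)) as Hs0.
    destruct L as [|r1 [|r2 L]]; [contradiction| |exfalso].
    + destruct Hr0 as [<-|[]]. simpl in Hs0. rewrite Cprod_lt_0 in Hs0. rewrite <- Hs0. ring.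
    + destruct (HL r1 (or_introl eq_refl)) as [H1 _].
      destruct (HL r2 (or_intror (or_introl eq_refl))) as [H2 _].
      destruct r1, r2; simpl in *; try lia. inversion Hnd; subst. apply H3; simpl; auto.
  - set (m0 := hd 0%nat r0).
    set (Lm := fun m => filter (fun r => Nat.eqb (hd 0%nat r) m) L).
    set (beta := fun al m => Csum (map (fun r => Cmult (b r)
           (Cprod_lt n (fun j => RtoC (p (nth j (tl r) 0%nat) (nth j al 0%nat))))) (Lm m))).
    assert (Hhd : forall r, In r L -> (hd 0%nat r <= K)%nat).
    { intros r Hr. destruct (HL r Hr) as [_ H]. specialize (H 0%nat). destruct r; simpl in *; lia. }
    assert (Hbeta : forall al, In al (box n A) -> forall m, (m <= K)%nat -> beta al m = RtoC 0).
    { intros al Hal. apply Hrow. intros a Ha.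
      pose proof (Hs (a :: al) (box_cons _ _ _ _ Ha Hal)) as E.
      rewrite (Csum_group_by_head _ _ K Hhd) in E. rewrite <- E. apply Csum_map_ext_in. intros m _.
      unfold beta, Lm. rewrite Cmult_comm, <- Csum_map_scal_l. apply Csum_map_ext_in. intros r Hr.
      apply filter_In in Hr. destruct Hr as [_ Hm]. apply Nat.eqb_eq in Hm.
      rewrite Cprod_lt_S,
        (Cprod_lt_ext n (fun j => RtoC (p (nth (S j) r 0%nat) (nth (S j) (a :: al) 0%nat)))
           (fun j => RtoC (p (nth j (tl r) 0%nat) (nth j al 0%nat))))
        by (intros; rewrite nth_S_tl; auto).
      replace (nth 0 r 0%nat) with m by (rewrite <- Hm; destruct r; auto). simpl. ring. }
    assert (Hcons : forall r, In r (Lm m0) -> r = m0 :: tl r).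
    { intros r Hr. apply filter_In in Hr. destruct Hr as [Hr Hm]. apply Nat.eqb_eq in Hm.
      destruct (HL r Hr) as [Hl _]. destruct r; simpl in *; [lia|subst; auto]. }
    assert (Hr0m : In r0 (Lm m0)) by (apply filter_In; split; auto; apply Nat.eqb_refl).
    rewrite (Hcons r0 Hr0m).
    apply (IH (map (@tl nat) (Lm m0)) (fun r' => b (m0 :: r'))); [| | |apply in_map; auto].
    + apply NoDup_map_NoDup_ForallPairs; [|apply NoDup_filter; auto].
      intros x y Hx Hy E. rewrite (Hcons x Hx), (Hcons y Hy), E. auto.
    + intros r' Hr'. apply in_map_iff in Hr'. destruct Hr' as [r [<- Hr]].
      apply filter_In in Hr. destruct (HL r (proj1 Hr)) as [Hl Hb].
      split; [destruct r; simpl in *; lia|]. intros j. rewrite <- nth_S_tl. apply Hb.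
    + intros al Hal. rewrite map_map, <- (Hbeta al Hal m0) by exact (Hhd r0 Hr0).
      apply Csum_map_ext_in. intros r Hr. rewrite <- (Hcons r Hr). auto.
Qed.

(** * Linear independence of the products of the [phi]'s as functions of [t] *)

Definition phi_cleared (K m : nat) : nat -> R := Nat.iter (K - m) mul_1_sub_X2 (phi_num m).

Lemma peval_phi_cleared K m w : (m <= K)%nat ->
  peval (phi_cleared K m) (2 * K + 2) w =
  Cmult (Cpow (Cminus (RtoC 1) (Cpow w 2)) (K - m)) (peval (phi_num m) (2 * m + 2) w).
Proof.
  intros H. unfold phi_cleared. replace (2 * K + 2)%nat with (2 * m + 2 + 2 * (K - m))%nat by lia.
  apply peval_iter_mul_1_sub_X2, vanish_from_phi_num.
Qed.

Lemma phi_mul_cleared K m y : (m <= K)%nat -> ce y <> RtoC 1 ->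
  Cmult (phi m y) (Cpow (Cminus (RtoC 1) (ce y)) (S K)) =
  peval (phi_cleared K m) (2 * K + 2) (ce (y / 2)).
Proof.
  intros Hm Hy. rewrite peval_phi_cleared by auto. unfold phi.
  replace (S K) with (S m + (K - m))%nat by lia. rewrite Cpow_add, <- (ce_half y).
  set (D := Cminus (RtoC 1) (ce y)).
  set (N := peval (phi_num m) (2 * m + 2) (ce (y / 2))).
  transitivity (Cmult (Cmult (Cpow (Cinv D) (S m)) (Cpow D (S m))) (Cmult (Cpow D (K - m)) N));
    [ring|].
  rewrite Cpow_Cinv_mul by (apply Csub1_neq0; auto). ring.
Qed.

Lemma pevalR_phi_cleared K m w : (m <= K)%nat ->
  pevalR (phi_cleared K m) (2 * K + 2) w = (1 - w ^ 2) ^ (K - m) * pevalR (phi_num m) (2 * m + 2) w.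
Proof.
  intros H. apply RtoC_inj.
  rewrite <- peval_RtoC, peval_phi_cleared, peval_RtoC, RtoC_mult by auto. f_equal.
  rewrite <- Cpow_RtoC, RtoC_minus, Cpow_RtoC. reflexivity.
Qed.

(** [phi_num m] at [w = 1] is [m!]. *)
Lemma pevalR_phi_num_1 m : pevalR (phi_num m) (2 * m + 2) 1 <> 0.
Proof.
  induction m.
  - replace (pevalR (phi_num 0) (2 * 0 + 2) 1) with 1; [lra|].
    apply RtoC_inj. rewrite <- peval_RtoC. symmetry. apply peval_phi_num_0.
  - replace (pevalR (phi_num (S m)) (2 * S m + 2) 1)
      with (INR (S m) * pevalR (phi_num m) (2 * m + 2) 1).
    + apply Rmult_integral_contrapositive_currified; auto. apply not_0_INR. lia.
    + apply RtoC_inj. rewrite <- peval_RtoC, peval_phi_num_S, !peval_RtoC, RtoC_mult. simpl Cpow.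
      apply C_ext; simpl; ring.
Qed.

Lemma continuity_pt_Rsum_lt N (h : nat -> R -> R) x :
  (forall m, (m < N)%nat -> continuity_pt (h m) x) ->
  continuity_pt (fun w => Rsum_lt N (fun m => h m w)) x.
Proof.
  revert h; induction N; intros h H.
  - apply (continuity_pt_ext (fun _ => 0)); [intros; reflexivity|].
    apply continuity_pt_const. intros ? ?; auto.
  - apply (continuity_pt_ext (fun w => h 0%nat w + Rsum_lt N (fun m => h (S m) w)));
      [intros; symmetry; apply Rsum_lt_S|].
    apply continuity_pt_plus; [apply H; lia|]. apply (IHN (fun m => h (S m))). intros; apply H; lia.
Qed.

Lemma continuity_pt_pevalR P B x : continuity_pt (pevalR P B) x.
Proof. apply (continuity_pt_Rsum_lt B (fun a w => P a * w ^ a)). intros. reg. Qed.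

Lemma continuity_pt_eq0_right (G : R -> R) x0 :
  continuity_pt G x0 -> (forall w, x0 < w -> G w = 0) -> G x0 = 0.
Proof.
  intros Hc HG. destruct (Req_dec (G x0) 0) as [E|E]; auto. exfalso.
  destruct (Hc _ (Rabs_pos_lt _ E)) as [alp [Ha H]].
  assert (Hd : R_dist (G (x0 + alp / 2)) (G x0) < Rabs (G x0)).
  { apply H. split; [split; [constructor|lra]|].
    change (R_dist (x0 + alp / 2) x0 < alp). unfold R_dist.
    replace (x0 + alp / 2 - x0) with (alp / 2) by ring. rewrite Rabs_right; lra. }
  rewrite HG in Hd by lra. unfold R_dist in Hd. rewrite Rminus_0_l, Rabs_Ropp in Hd. lra.
Qed.

(** Near [w = 1] the terms with [m < M] carry a factor [1 - w^2], leaving [beta M * M!]. *)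
Lemma phi_num_top_coef_eq0 M (beta : nat -> R) :
  (forall w, 1 < w -> Rsum_lt (S M) (fun m =>
       beta m * ((1 - w ^ 2) ^ (M - m) * pevalR (phi_num m) (2 * m + 2) w)) = 0) ->
  beta M = 0.
Proof.
  set (G := fun w => Rsum_lt (S M) (fun m =>
              beta m * ((1 - w ^ 2) ^ (M - m) * pevalR (phi_num m) (2 * m + 2) w))).
  intros HG.
  assert (HG1 : G 1 = 0).
  { apply continuity_pt_eq0_right; auto. apply continuity_pt_Rsum_lt. intros m _.
    apply continuity_pt_mult; [reg|]. apply continuity_pt_mult; [reg|apply continuity_pt_pevalR]. }
  unfold G in HG1. rewrite Rsum_lt_Sr, Rsum_lt_eq0, Nat.sub_diag in HG1.
  - pose proof (pevalR_phi_num_1 M). simpl pow in HG1. nra.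
  - intros j Hj. replace (M - j)%nat with (S (M - j - 1)) by lia. simpl. ring.
Qed.

Lemma phi_cleared_rows_indep_R K (beta : nat -> R) :
  (forall a, (a < 2 * K + 2)%nat -> Rsum_lt (S K) (fun m => beta m * phi_cleared K m a) = 0) ->
  forall m, (m <= K)%nat -> beta m = 0.
Proof.
  intros Hb.
  assert (Hw : forall w,
             Rsum_lt (S K) (fun m => beta m * pevalR (phi_cleared K m) (2 * K + 2) w) = 0).
  { intros w. unfold pevalR.
    rewrite (Rsum_lt_ext (S K) _
               (fun m => Rsum_lt (2 * K + 2) (fun a => w ^ a * (beta m * phi_cleared K m a))))
      by (intros; rewrite Rsum_lt_scal; apply Rsum_lt_ext; intros; ring).
    rewrite Rsum_lt_swap. apply Rsum_lt_eq0. intros a Ha.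
    rewrite <- Rsum_lt_scal, Hb by auto. ring. }
  assert (Hdown : forall M, (M <= K)%nat ->
            (forall m, (M < m <= K)%nat -> beta m = 0) -> beta M = 0).
  { intros M HM Hgt. apply phi_num_top_coef_eq0. intros w Hw1.
    assert (Hne : (1 - w ^ 2) ^ (K - M) <> 0) by (apply pow_nonzero; nra).
    apply (Rmult_eq_reg_l ((1 - w ^ 2) ^ (K - M))); auto.
    rewrite Rmult_0_r, <- (Hw w), Rsum_lt_scal.
    rewrite (Rsum_lt_widen (S M) (S K)); [|lia|intros j Hj; rewrite Hgt by lia; ring].
    apply Rsum_lt_ext. intros m Hm. rewrite pevalR_phi_cleared by lia.
    replace (K - m)%nat with (K - M + (M - m))%nat by lia. rewrite pow_add. ring. }
  assert (Hall : forall i m, (K - i <= m <= K)%nat -> beta m = 0).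
  { induction i; intros m Hm.
    - apply Hdown; [lia|]. intros; lia.
    - destruct (Nat.eq_dec m (K - S i)) as [->|Hne]; [|apply IHi; lia].
      apply Hdown; [lia|]. intros m' Hm'. apply IHi; lia. }
  intros m Hm. apply (Hall K); lia.
Qed.

Lemma phi_cleared_rows_indep K (beta : nat -> C) :
  (forall a, (a < 2 * K + 2)%nat ->
     Csum (map (fun m => Cmult (beta m) (RtoC (phi_cleared K m a))) (seq 0 (S K))) = RtoC 0) ->
  forall m, (m <= K)%nat -> beta m = RtoC 0.
Proof.
  intros H m Hm.
  assert (Hpart : forall pr : C -> R,
            (forall x y, pr (Cplus x y) = pr x + pr y) -> pr (RtoC 0) = 0 ->
            (forall x r, pr (Cmult x (RtoC r)) = pr x * r) -> pr (beta m) = 0).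
  { intros pr Hplus H0 Hscal. apply (phi_cleared_rows_indep_R K (fun m => pr (beta m))); auto.
    intros a Ha. transitivity (pr (RtoC 0)); [|exact H0]. rewrite <- (H a Ha). clear H.
    unfold Rsum_lt. induction (seq 0 (S K)) as [|x l IHl]; simpl; [now rewrite H0|].
    rewrite Hplus, Hscal, IHl. reflexivity. }
  apply C_ext; [apply (Hpart fst) | apply (Hpart snd)]; intros; simpl; auto; ring.
Qed.

Lemma exp_sum_coefs_eq0 {X} (L : list X) (Cf : X -> C) (lam : X -> R) (B eps : R) :
  NoDup L -> (forall x y, In x L -> In y L -> lam x = lam y -> x = y) ->
  0 <= B -> (forall x, In x L -> 0 <= lam x <= B) -> 0 < eps ->
  (forall t, 0 < t < eps -> Csum (map (fun x => Cmult (Cf x) (ce (t * lam x))) L) = RtoC 0) ->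
  forall x, In x L -> Cf x = RtoC 0.
Proof.
  intros Hnd Hinj HB Hlam Heps Hs.
  set (N := INR (length L)). assert (HN : 0 <= N) by apply pos_INR.
  set (e := Rmin eps 1).
  assert (He : 0 < e <= eps /\ e <= 1) by (unfold e, Rmin; destruct Rle_dec; lra).
  set (h := e / ((N + 1) * (B + 1))).
  assert (Hh : 0 < h) by (unfold h; apply Rdiv_lt_0_compat; nra).
  assert (Hhe : h * ((N + 1) * (B + 1)) = e) by (unfold h; field; nra).
  assert (HhB : h * B < 1) by nra.
  apply (vandermonde L Cf (fun x => ce (h * lam x))); auto.
  - intros x y Hx Hy E. apply Hinj; auto.
    destruct (Req_dec (lam x) (lam y)) as [|Hne]; auto. exfalso.
    apply (ce_neq1 (h * lam x - h * lam y)); [|rewrite ce_sub, E; field; apply ce_neq0].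
    pose proof (Hlam x Hx). pose proof (Hlam y Hy). pose proof PI_RGT_0.
    rewrite <- Rmult_minus_distr_l, Rabs_mult, (Rabs_right h) by lra.
    assert (0 < Rabs (lam x - lam y) <= B) by (split; [apply Rabs_pos_lt; lra|apply Rabs_le; lra]).
    split; [apply Rmult_lt_0_compat; lra|]. assert (3 < PI) by (pose proof PI2_3_2; lra). nra.
  - intros x _. apply ce_neq0.
  - intros m Hm. rewrite <- (Hs (INR m * h)).
    + apply Csum_map_ext_in. intros x _. rewrite ce_pow. do 2 f_equal. ring.
    + assert (1 <= INR m <= N) by (split; [apply (le_INR 1)|apply le_INR]; lia).
      split; [apply Rmult_lt_0_compat; lra|].
      apply (Rle_lt_trans _ (N * h)); [apply Rmult_le_compat_r; lra|].
      nra.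
Qed.

Definition freq (n : nat) (u : nat -> R) (al : list nat) : R :=
  Rsum_lt n (fun j => INR (nth j al 0%nat) * (u j / 2)).

Lemma freq_inj n u al be : Q_lin_indep n u -> length al = n -> length be = n ->
  freq n u al = freq n u be -> al = be.
Proof.
  intros Hind Ha Hb E.
  set (q := fun j => inject_Z (Z.of_nat (nth j al 0%nat) - Z.of_nat (nth j be 0%nat))).
  assert (Hq : forall j, Q2R (q j) = INR (nth j al 0%nat) - INR (nth j be 0%nat)).
  { intros j. unfold q, Q2R, inject_Z. simpl. rewrite minus_IZR, <- !INR_IZR_INZ. field. }
  assert (Hs : Rsum_lt n (fun j => Q2R (q j) * u j) = 0).
  { rewrite (Rsum_lt_ext n _ (fun j => 2 * (INR (nth j al 0%nat) * (u j / 2))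
                                     + (-2) * (INR (nth j be 0%nat) * (u j / 2))))
      by (intros j _; rewrite Hq; field).
    rewrite Rsum_lt_plus, <- !Rsum_lt_scal. unfold freq in E. rewrite E. ring. }
  apply nth_ext with (d := 0%nat) (d' := 0%nat); [lia|].
  intros j Hj. apply INR_eq. specialize (Hind q Hs j ltac:(lia)).
  apply Qeq_eqR in Hind. rewrite Hq in Hind. unfold Q2R in Hind. simpl in Hind. lra.
Qed.

Lemma freq_bound n u A al : (forall j, (j < n)%nat -> 0 < u j) -> In al (box n A) ->
  0 <= freq n u al <= INR A * Rsum_lt n u.
Proof.
  intros Hu Hal. destruct (box_spec _ _ _ Hal) as [_ Hb]. unfold freq. split.
  - apply Rsum_lt_ge0. intros j Hj. specialize (Hu j Hj).
    pose proof (pos_INR (nth j al 0%nat)). nra.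
  - rewrite Rsum_lt_scal. apply Rsum_lt_le. intros j Hj. specialize (Hu j Hj). specialize (Hb j Hj).
    apply lt_INR in Hb. pose proof (pos_INR (nth j al 0%nat)). nra.
Qed.

Lemma good_time_small n u t : (forall j, (j < n)%nat -> 0 < u j) ->
  0 < t < / (Rsum_lt n u + 1) -> good_time n u t.
Proof.
  intros Hu Ht.
  assert (HS : 0 <= Rsum_lt n u) by (apply Rsum_lt_ge0; intros j Hj; specialize (Hu j Hj); lra).
  assert (Ht1 : t * (Rsum_lt n u + 1) < 1).
  { apply (Rlt_le_trans _ (/ (Rsum_lt n u + 1) * (Rsum_lt n u + 1)));
      [apply Rmult_lt_compat_r; lra|].
    rewrite Rinv_l; lra. }
  split; [lra|]. intros j Hj. apply ce_neq1.
  pose proof (Rsum_lt_ge_term n u j ltac:(intros; apply Rlt_le, Hu; auto) Hj).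
  specialize (Hu j Hj). rewrite Rabs_right by nra. pose proof PI2_3_2. split; nra.
Qed.

Definition cleared_coef (n K : nat) (L : list (list nat)) (a : list nat -> R) (al : list nat) : C :=
  Csum (map (fun r => Cmult (RtoC (a r))
    (Cprod_lt n (fun j => RtoC (phi_cleared K (nth j r 0%nat) (nth j al 0%nat))))) L).

Lemma phi_prod_mul_cleared n u K L (a : list nat -> R) t :
  (forall r, In r L -> forall j, (nth j r 0%nat <= K)%nat) ->
  (forall j, (j < n)%nat -> ce (t * u j) <> RtoC 1) ->
  Cmult (Csum (map (fun r => Cmult (RtoC (a r)) (phi_prod n r (fun j => t * u j))) L))
        (Cprod_lt n (fun j => Cpow (Cminus (RtoC 1) (ce (t * u j))) (S K))) =
  Csum (map (fun al => Cmult (cleared_coef n K L a al) (ce (t * freq n u al))) (box n (2 * K + 2))).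
Proof.
  intros HL Ht. unfold cleared_coef.
  rewrite (Csum_map_ext_in (fun al => Cmult (Csum _) _)
             (fun al => Csum (map (fun r => Cmult (RtoC (a r)) (Cmult
                (Cprod_lt n (fun j => RtoC (phi_cleared K (nth j r 0%nat) (nth j al 0%nat))))
                (ce (t * freq n u al)))) L)))
    by (intros al _; rewrite <- Csum_map_scal_r; apply Csum_map_ext_in; intros; ring).
  rewrite Csum_map_swap, <- Csum_map_scal_r. apply Csum_map_ext_in. intros r Hr.
  rewrite <- Cmult_assoc, Csum_map_scal_l. f_equal. unfold phi_prod.
  rewrite <- Cprod_lt_mult,
    (Cprod_lt_ext n _
       (fun j => peval (phi_cleared K (nth j r 0%nat)) (2 * K + 2) (ce (t * u j / 2))))
    by (intros j Hj; apply phi_mul_cleared; auto).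
  unfold peval. rewrite Cprod_lt_Csum. apply Csum_map_ext_in. intros al _.
  rewrite Cprod_lt_mult. f_equal.
  unfold freq. rewrite Rsum_lt_scal, <- Cprod_lt_ce. apply Cprod_lt_ext. intros j _.
  rewrite ce_pow. f_equal. field.
Qed.

(** Multiplying by [prod_j (1 - e^{i t u_j})^{K+1}] turns the combination into an exponential
    sum whose frequencies [sum_j al_j u_j / 2] are distinct by the [Q]-independence of [u]. *)
Lemma phi_prod_lin_indep n u K (Hpos : forall j, (j < n)%nat -> 0 < u j) (Hind : Q_lin_indep n u)
  L (a : list nat -> R) :
  NoDup L -> (forall r, In r L -> length r = n /\ forall j, (nth j r 0%nat <= K)%nat) ->
  (forall t, good_time n u t ->
     Csum (map (fun r => Cmult (RtoC (a r)) (phi_prod n r (fun j => t * u j))) L)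
       = RtoC 0) ->
  forall r, In r L -> a r = 0.
Proof.
  intros Hnd HL Hs.
  assert (HS : 0 <= Rsum_lt n u) by (apply Rsum_lt_ge0; intros j Hj; specialize (Hpos j Hj); lra).
  assert (Hcoef : forall al, In al (box n (2 * K + 2)) -> cleared_coef n K L a al = RtoC 0).
  { apply (exp_sum_coefs_eq0 _ _ (freq n u) (INR (2 * K + 2) * Rsum_lt n u) (/ (Rsum_lt n u + 1)));
      [apply box_NoDup | | apply Rmult_le_pos; [apply pos_INR|lra]
      | intros; apply freq_bound; auto | apply Rinv_0_lt_compat; lra |].
    - intros x y Hx Hy. apply freq_inj; auto; [apply (box_spec _ _ _ Hx)|apply (box_spec _ _ _ Hy)].
    - intros t Ht. destruct (good_time_small n u t Hpos Ht) as [Ht0 Htu].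
      rewrite <- phi_prod_mul_cleared, Hs by (try split; auto; intros; apply HL; auto). ring. }
  intros r Hr. apply RtoC_inj.
  apply (tensor_rows_indep (phi_cleared K) K (2 * K + 2) (phi_cleared_rows_indep K) n L
           (fun r => RtoC (a r))); auto.
Qed.

(** * The coefficients of [Tr] and [V] *)

Lemma Dmulti_from_zero r j : Dmulti_from j r (fun _ => RtoC 0) = (fun _ => RtoC 0).
Proof.
  assert (Hz : forall j, Dpart j (fun _ => RtoC 0) = (fun _ => RtoC 0)).
  { intros i. apply functional_extensionality. intros th. unfold Dpart. simpl.
    rewrite !Derive_const. apply C_ext; simpl; ring. }
  revert j; induction r as [|a r IH]; intros j; simpl; auto.
  rewrite IH. induction a; simpl; auto. rewrite IHa. apply Hz.
Qed.

Lemma Pk_zero n c t k th : Pk n c t k (fun _ => RtoC 0) th = RtoC 0.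
Proof.
  unfold Pk. apply Csum_eq0. intros x Hx. apply in_flat_map in Hx. destruct Hx as [d [_ Hx]].
  destruct (Nat.leb (2 * d - 2) k); [|contradiction].
  apply in_map_iff in Hx. destruct Hx as [r [<- _]]. unfold Dmulti. rewrite Dmulti_from_zero. ring.
Qed.

Lemma Pk_0 n c t g th : c_admissible n c -> Pk n c t 0 g th = RtoC 0.
Proof.
  intros Hc. unfold Pk. apply Csum_eq0. intros x Hx. apply in_flat_map in Hx.
  destruct Hx as [d [Hd Hx]]. apply in_seq in Hd. replace d with 1%nat in * by lia.
  simpl in Hx. apply in_map_iff in Hx. destruct Hx as [r [<- Hr]].
  destruct (multi_spec _ _ _ Hr). rewrite Hc by auto. rewrite Rmult_0_l. ring.
Qed.

Lemma Pcomp_0 n c t ks g : c_admissible n c -> In 0%nat ks -> Pcomp n c t ks g = (fun _ => RtoC 0).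
Proof.
  intros Hc. induction ks as [|k ks IH]; intros Hin; [contradiction|].
  apply functional_extensionality. intros th. simpl. destruct Hin as [->|Hin].
  - apply Pk_0; auto.
  - fold (Pcomp n c t ks g). rewrite IH by auto. apply Pk_zero.
Qed.

Definition coef_agree (n : nat) (c c' : list nat -> nat -> R) (s : nat) : Prop :=
  forall d r, (1 <= d)%nat -> (2 * d - 2 <= s)%nat -> In r (multi n d) ->
    c r (s + 2 - 2 * d)%nat = c' r (s + 2 - 2 * d)%nat.

Lemma coef_agree_0 n c c' : c_admissible n c -> c_admissible n c' -> coef_agree n c c' 0.
Proof.
  intros Hc Hc' d r Hd1 Hd2 Hr. replace d with 1%nat in * by lia.
  destruct (multi_spec _ _ _ Hr). simpl. rewrite Hc, Hc'; auto.
Qed.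

Lemma Pk_agree n c c' t k g th : coef_agree n c c' k -> Pk n c t k g th = Pk n c' t k g th.
Proof.
  intros H. unfold Pk. rewrite !flat_map_concat_map. do 2 f_equal.
  apply map_ext_in. intros d Hd. apply in_seq in Hd.
  destruct (Nat.leb_spec (2 * d - 2) k); auto. apply map_ext_in. intros r Hr. rewrite H; auto. lia.
Qed.

Lemma Pcomp_agree n c c' t ks g : (forall k, In k ks -> coef_agree n c c' k) ->
  Pcomp n c t ks g = Pcomp n c' t ks g.
Proof.
  induction ks as [|k ks IH]; intros H; auto. simpl.
  fold (Pcomp n c t ks g) (Pcomp n c' t ks g). rewrite IH by (intros; apply H; simpl; auto).
  apply functional_extensionality. intros th. apply Pk_agree, H. simpl; auto.
Qed.

(** In a product [P_{k_1} ... P_{k_m}] with [m >= 2] contributing to [hbar^s], either some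
    [k_i = 0] (and [P_0 = 0]) or all [k_i < s]. *)
Lemma Pcomp_agree_lower n c c' t s m ks g : c_admissible n c -> c_admissible n c' ->
  (forall k, (k < s)%nat -> coef_agree n c c' k) -> (2 <= m)%nat -> In ks (multi m s) ->
  Pcomp n c t ks g = Pcomp n c' t ks g.
Proof.
  intros Hc Hc' Hlow Hm Hks. destruct (multi_spec _ _ _ Hks) as [Hl Hs].
  destruct (in_dec Nat.eq_dec 0%nat ks) as [H0|H0]; [rewrite !Pcomp_0; auto|].
  apply Pcomp_agree. intros k Hk. apply Hlow. rewrite <- Hs. apply In_lt_lsum; [auto|lia|].
  intros [|y] Hy; [contradiction|lia].
Qed.

Definition Pk_indices (n s : nat) : list (list nat) :=
  flat_map (fun d => if Nat.leb (2 * d - 2) s then multi n d else []) (seq 1 (S s)).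

Lemma Pk_indices_spec n s r : In r (Pk_indices n s) ->
  length r = n /\ (1 <= lsum r <= S s)%nat /\ (2 * lsum r - 2 <= s)%nat.
Proof.
  intros H. apply in_flat_map in H. destruct H as [d [Hd H]]. apply in_seq in Hd.
  destruct (Nat.leb_spec (2 * d - 2) s); [|contradiction].
  destruct (multi_spec _ _ _ H). subst. lia.
Qed.

Lemma Pk_indices_NoDup n s : NoDup (Pk_indices n s).
Proof.
  apply NoDup_flat_map; [apply seq_NoDup| |].
  - intros d _. destruct (Nat.leb (2 * d - 2) s); [apply multi_NoDup|constructor].
  - intros x y z _ _ Hx Hy.
    destruct (Nat.leb (2 * x - 2) s), (Nat.leb (2 * y - 2) s); try contradiction.
    destruct (multi_spec _ _ _ Hx), (multi_spec _ _ _ Hy). lia.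
Qed.

Lemma Csum_flat_map_if {B} (l : list nat) (b : nat -> bool) (M : nat -> list B)
  (g : nat -> B -> C) (G : B -> C) :
  (forall d r, In d l -> In r (M d) -> g d r = G r) ->
  Csum (flat_map (fun d => if b d then map (g d) (M d) else []) l) =
  Csum (map G (flat_map (fun d => if b d then M d else []) l)).
Proof.
  induction l as [|d l IH]; intros H; simpl; auto.
  rewrite map_app, !Csum_app, IH by (intros; apply H; simpl; auto). f_equal.
  destruct (b d); auto. f_equal. apply map_ext_in. intros; apply H; simpl; auto.
Qed.

(** The factor [t^{-|r|}] of [P_s] cancels the [t^{|r|}] produced by [D_theta^r]. *)
Lemma VCoef_phi_prod n c u t s : good_time n u t ->
  VCoef n c u t s = Csum (map (fun r => Cmult (RtoC (c r (s + 2 - 2 * lsum r)%nat))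
                                 (phi_prod n r (fun j => t * u j))) (Pk_indices n s)).
Proof.
  intros [Ht Hu]. unfold VCoef, Pk, Pk_indices. apply Csum_flat_map_if.
  intros d r _ Hr. destruct (multi_spec _ _ _ Hr) as [Hl Hs].
  rewrite Dmulti_Fmodel by auto. rewrite Hs, Cmult_assoc, <- RtoC_mult.
  do 2 f_equal. field. apply pow_nonzero; auto.
Qed.

Lemma coef_agree_of_VCoef_eq n u c c' s (Hpos : forall j, (j < n)%nat -> 0 < u j) :
  Q_lin_indep n u ->
  (forall t, good_time n u t -> VCoef n c u t s = VCoef n c' u t s) ->
  coef_agree n c c' s.
Proof.
  intros Hind HV.
  set (a := fun r => c r (s + 2 - 2 * lsum r)%nat - c' r (s + 2 - 2 * lsum r)%nat).
  assert (Ha : forall r, In r (Pk_indices n s) -> a r = 0).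
  { apply (phi_prod_lin_indep n u (S s) Hpos Hind); [apply Pk_indices_NoDup| |].
    - intros r Hr. destruct (Pk_indices_spec _ _ _ Hr) as [Hl [Hb _]]. split; auto.
      intros j. pose proof (nth_le_lsum r j). lia.
    - intros t Ht. pose proof (HV t Ht) as E. rewrite !VCoef_phi_prod in E by auto.
      match type of E with ?x = ?y => transitivity (Cminus x y); [|rewrite E; ring] end.
      rewrite <- Csum_map_minus. apply Csum_map_ext_in. intros r _.
      unfold a. rewrite RtoC_minus. ring. }
  intros d r Hd1 Hd2 Hr. destruct (multi_spec _ _ _ Hr) as [Hl Hsum].
  assert (HrL : In r (Pk_indices n s)).
  { apply in_flat_map. exists d. split; [apply in_seq; lia|].
    destruct (Nat.leb_spec (2 * d - 2) s); [auto|lia]. }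
  specialize (Ha r HrL). unfold a in Ha. rewrite Hsum in Ha. lra.
Qed.

Definition TrCoef_tail (n : nat) (c : list nat -> nat -> R) (u : nat -> R) (t : R) (s : nat) : C :=
  Csum (map (fun m =>
     Cmult (Cdiv (Cpow (Cmult Ci (RtoC t)) m) (RtoC (fact_R m)))
           (Csum (map (fun ks => Pcomp n c t ks (Fmodel n t) u) (multi m (S s)))))
   (seq 2 s)).

Lemma TrCoef_S n c u t s :
  TrCoef n c u t (S s) =
  Cplus (Cmult (Cmult Ci (RtoC t)) (VCoef n c u t (S s))) (TrCoef_tail n c u t s).
Proof.
  unfold TrCoef, TrCoef_tail. change (seq 0 (S (S s))) with (0%nat :: 1%nat :: seq 2 s).
  rewrite !Csum_map_cons, multi_1. simpl. rewrite Rmult_1_r. unfold VCoef. field.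
Qed.

Lemma TrCoef_tail_agree n c c' u t s : c_admissible n c -> c_admissible n c' ->
  (forall k, (k <= s)%nat -> coef_agree n c c' k) -> TrCoef_tail n c u t s = TrCoef_tail n c' u t s.
Proof.
  intros Hc Hc' Hlow. apply Csum_map_ext_in. intros m Hm. apply in_seq in Hm. f_equal.
  apply Csum_map_ext_in. intros ks Hks.
  rewrite (Pcomp_agree_lower n c c' t (S s) m ks); auto; [intros; apply Hlow|]; lia.
Qed.

Lemma VCoef_eq_of_TrCoef_eq n c c' u t s : c_admissible n c -> c_admissible n c' -> t <> 0 ->
  (forall k, (k <= s)%nat -> coef_agree n c c' k) ->
  TrCoef n c u t (S s) = TrCoef n c' u t (S s) -> VCoef n c u t (S s) = VCoef n c' u t (S s).
Proof.
  intros Hc Hc' Ht Hlow E. rewrite !TrCoef_S, (TrCoef_tail_agree n c c') in E by auto.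
  set (V := VCoef n c u t (S s)) in *. set (V' := VCoef n c' u t (S s)) in *.
  assert (Hd : Cmult (Cminus V V') (Cmult Ci (RtoC t)) = RtoC 0).
  { match type of E with ?x = ?y => transitivity (Cminus x y); [ring|rewrite E; ring] end. }
  apply Cmult_eq0_reg_r in Hd; [|apply Cmult_neq_0; intros H; injection H; lra].
  replace V with (Cplus (Cminus V V') V') by ring. rewrite Hd. ring.
Qed.

Theorem theorem4 (n : nat) (u : nat -> R)
  (Hn : (1 <= n)%nat)
  (Hpos : forall j, (j < n)%nat -> 0 < u j)
  (Hind : Q_lin_indep n u)
  (l : nat) (c c' : list nat -> nat -> R)
  (Hc : c_admissible n c) (Hc' : c_admissible n c')
  (Htr : forall s, (s <= l)%nat -> forall t, good_time n u t ->
           TrCoef n c u t s = TrCoef n c' u t s) :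
  forall s, (s <= l)%nat -> forall t, good_time n u t ->
    VCoef n c u t s = VCoef n c' u t s.
Proof.
  assert (Hagree : forall s, (s <= l)%nat -> forall k, (k <= s)%nat -> coef_agree n c c' k).
  { induction s as [|s IH]; intros Hs k Hk.
    - replace k with 0%nat by lia. apply coef_agree_0; auto.
    - destruct (Nat.eq_dec k (S s)) as [->|Hne]; [|apply IH; lia].
      apply coef_agree_of_VCoef_eq with u; auto. intros t Ht.
      apply VCoef_eq_of_TrCoef_eq; [auto|auto|apply Ht|apply IH; lia|apply Htr; auto]. }
  intros s Hs t Ht. unfold VCoef. apply Pk_agree, (Hagree s); auto.
Qed.
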